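(* Let $U=U_1\times\cdots\times U_m$ with $U_i\subseteq\mathbb{R}^p$ be convex, $C\subseteq\mathbb{R}^{mp}$, $\overline{U}=U\cap C$, with $0\in\overline{U}$. Let $b\in\mathbb{R}^m$, let $f_1:\mathbb{R}^{n_1}\to\mathbb{R}$, $f_2:\mathbb{R}^{n_2}\to\mathbb{R}$ be convex with $f_1(0)=f_2(0)=0$, and for each $i\in[m]$ let $g_i(x,y,u_i)$ be concave in $(x,y)$ and convex in $u_i$, with $g_i(0,0,u_i)\ge0$ for all $u\in\overline{U}$ and $g_i(x,y,0)\le0$ for all feasible $x,y$. For a set $S$ define $$z^{\rm ad}(S)=\sup_{x,\ y:S\to\mathbb{R}^{n_2}}\Big\{f_1(x)+\inf_{u\in S}f_2(y(u)):\ g_i(x,y(u),u_i)\le b_i\ \forall u\in S,\ \forall i\Big\},$$ $$z^{\rm st}(S)=\sup_{x,y}\{f_1(x)+f_2(y):\ g_i(x,y,u_i)\le b_i\ \forall u\in S,\ \forall i\},$$ and $z_{\rm aro}=z^{\rm ad}(U)$, $z_{\rm acp}=z^{\rm ad}(\overline{U})$, $z_{\rm ro}=z^{\rm st}(U)$, $z_{\rm cp}=z^{\rm st}(\overline{U})$. Let $\gamma_{\rm ro}=\gamma(U,\Pi(\overline{U}))$ and $\gamma_{\rm aro}=\gamma(U,\overline{U})$. If $z_{\rm acp}>0$ and $z_{\rm ro}<\infty$, then $$\frac{z_{\rm cp}}{z_{\rm ro}}\ge\frac{1}{\gamma_{\rm ro}},\qquad\frac{z_{\rm acp}}{z_{\rm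 aro}}\ge\frac{1}{\gamma_{\rm aro}}.$$ Furthermore, the bounds are tight.
   Context: $u=(u_1,\dots,u_m)$ with $u_i\in\mathbb{R}^p$; $\Pi_i(S)$ is the projection of $S$ onto the $i$-th block, $\Pi(S)=\Pi_1(S)\times\cdots\times\Pi_m(S)$. For $r\ge0$, $rS=\{rx:x\in S\}$; $\gamma(S_1,S_2)=\min\{\gamma\ge0:S_2\subseteq\gamma S_1\}$. *)

From HB Require Import structures.
From mathcomp Require Import all_boot all_order all_algebra.
From mathcomp Require Import all_classical all_reals.
From mathcomp Require Import ereal.
Set Implicit Arguments. Unset Strict Implicit. Unset Printing Implicit Defensive.
Import Order.TTheory GRing.Theory Num.Theory.
Local Open Scope classical_set_scope.
Local Open Scope ring_scope.

Section Defs.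
Variable R : realType.

Definition convex_set (V : lmodType R) (S : set V) : Prop :=
  forall x y (t : R), S x -> S y -> 0 <= t <= 1 -> S (t *: x + (1 - t) *: y).

Definition convex_fun (V : lmodType R) (f : V -> R) : Prop :=
  forall x y (t : R), 0 <= t <= 1 ->
    f (t *: x + (1 - t) *: y) <= t * f x + (1 - t) * f y.

Definition concave_fun2 (X Y : lmodType R) (h : X -> Y -> R) : Prop :=
  forall x1 x2 y1 y2 (t : R), 0 <= t <= 1 ->
    t * h x1 y1 + (1 - t) * h x2 y2 <= h (t *: x1 + (1 - t) *: x2) (t *: y1 + (1 - t) *: y2).

Variables (m p n1 n2 : nat).
(* A point u of R^{mp} is an m x p matrix; its i-th block u_i is row i u. *)
Notation uT := 'M[R]_(m, p).

Definition scale_set (V : lmodType R) (r : R) (S : set V) : set V := [set r *: x | x in S].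

Definition proj_i (i : 'I_m) (S : set uT) : set 'rV[R]_p := [set row i u | u in S].
Definition proj_all (S : set uT) : set uT := [set u | forall i, proj_i i S (row i u)].

Definition gammaS (S1 S2 : set uT) : \bar R :=
  ereal_inf [set r%:E | r in [set r : R | 0 <= r /\ S2 `<=` scale_set r S1]].

Definition prod_set (Ui : 'I_m -> set 'rV[R]_p) : set uT :=
  [set u | forall i, Ui i (row i u)].

Variables (b : 'I_m -> R) (f1 : 'rV[R]_n1 -> R) (f2 : 'rV[R]_n2 -> R)
  (g : 'I_m -> 'rV[R]_n1 -> 'rV[R]_n2 -> 'rV[R]_p -> R).

Definition z_ad (S : set uT) : \bar R :=
  ereal_sup [set z | exists (x : 'rV[R]_n1) (y : uT -> 'rV[R]_n2),
     (forall u, S u -> forall i, g i x (y u) (row i u) <= b i) /\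
     z = ((f1 x)%:E + ereal_inf [set (f2 (y u))%:E | u in S])%E].

Definition z_st (S : set uT) : \bar R :=
  ereal_sup [set z | exists (x : 'rV[R]_n1) (y : 'rV[R]_n2),
     (forall u, S u -> forall i, g i x y (row i u) <= b i) /\
     z = (f1 x + f2 y)%:E].

End Defs.

Definition setting (R : realType) (m p n1 n2 : nat) (Ui : 'I_m -> set 'rV[R]_p)
  (C : set 'M[R]_(m, p)) (b : 'I_m -> R) (f1 : 'rV[R]_n1 -> R) (f2 : 'rV[R]_n2 -> R)
  (g : 'I_m -> 'rV[R]_n1 -> 'rV[R]_n2 -> 'rV[R]_p -> R) : Prop :=
  let U := prod_set Ui in
  let Ubar := U `&` C in
  (forall i, convex_set (Ui i)) /\
  Ubar 0 /\
  (convex_fun f1 /\ convex_fun f2) /\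
  (f1 0 = 0 /\ f2 0 = 0) /\
  (forall i u, concave_fun2 (fun x y => g i x y u)) /\
  (forall i x y, convex_fun (g i x y)) /\
  (forall i u, Ubar u -> 0 <= g i 0 0 (row i u)) /\
  (forall i x y, g i x y 0 <= 0).

From HB Require Import structures.
From mathcomp Require Import all_boot all_order all_algebra.
From mathcomp Require Import all_classical all_reals.
From mathcomp Require Import ereal.
From mathcomp Require Import ring lra.
Import Order.TTheory GRing.Theory Num.Theory.
Local Open Scope classical_set_scope.
Local Open Scope ring_scope.

(* If the uncertainty set [Ubar] fits in [r U] with [0 < r <= 1], then every
   solution [(x, y)] that is feasible over [U] becomes feasible over [Ubar] after
   being divided by [r]: convexity of [g_i] in [u] with [g_i(., ., 0) <= 0] and
   [g_i(0, 0, .) >= 0] on [Ubar], together with joint concavity in [(x, y)],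
   absorb the factor, while convexity of [f] with [f(0) = 0] makes the objective
   grow by at least [1 / r].  Hence [z(U) <= r z(Ubar)] for every admissible [r],
   and the infimum over [r] is the gauge [gamma].  Equality holds for
   [max x s.t. x u <= 1] with [U = [0, 1]] and [Ubar = [0, gamma]]. *)

Section Convexity.
Context {R : realType}.

Lemma convex_fun_scale_le {V : lmodType R} {f : V -> R} (v : V) {r : R} :
  convex_fun f -> f 0 <= 0 -> 0 <= r <= 1 -> f (r *: v) <= r * f v.
Proof.
move=> cvx f0 r01; have := cvx v 0 r r01.
rewrite scaler0 addr0 => /le_trans; apply.
by rewrite gerDl mulr_ge0_le0 // subr_ge0; case/andP: r01.
Qed.

Lemma convex_fun_le_scaleV {V : lmodType R} {f : V -> R} (v : V) {r : R} :
  convex_fun f -> f 0 <= 0 -> 0 < r <= 1 -> f v <= r * f (r^-1 *: v).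
Proof.
move=> cvx f0 /andP[r_gt0 r_le1].
rewrite -[X in f X <= _](scale1r v) -(mulfV (lt0r_neq0 r_gt0)) -scalerA.
by apply: convex_fun_scale_le; rewrite // ltW.
Qed.

End Convexity.

Section Ratio.
Context {R : realType}.
Local Open Scope ereal_scope.

Lemma ratio_le_of_scale (A B : \bar R) (T : set R) :
  (forall r, T r -> (0 <= r)%R) -> T 1%R -> (T 0%R -> forall r, (0 < r)%R -> T r) ->
  (forall r, T r -> (0 < r <= 1)%R -> A <= B * r%:E) ->
  A * (ereal_inf [set r%:E | r in T])^-1 <= B.
Proof.
move=> T_ge0 T1 T0 AB; set gam := ereal_inf _.
have gam_ge0 : 0 <= gam by apply: le_ereal_inf_tmp => _ [r /T_ge0 r_ge0 <-].
have gam_le1 : gam <= 1 by apply: ereal_inf_lbound; exists 1%R.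
have A_le_B : A <= B by rewrite -[B]mule1; apply: AB; rewrite // ltr01 lexx.
have [A_le0|A_gt0] := leP A 0.
  by apply: le_trans A_le_B; apply: lee_nemulr; rewrite // inve_ge1.
case: B A_le_B AB (lt_le_trans A_gt0 A_le_B) => [c||] //; last by move=> *; rewrite leey.
case: A A_gt0 => [a||] //; rewrite !lte_fin lee_fin => a_gt0 a_le_c AB c_gt0.
have ac_le r : T r -> (0 < r)%R -> (a / c <= r)%R.
  move=> Tr r_gt0; rewrite ler_pdivrMr //.
  have [r_le1|r_gt1] := leP r 1%R.
    by rewrite -lee_fin EFinM muleC AB // r_gt0.
  by apply: le_trans a_le_c _; rewrite ler_peMl // ?ltW.
have ac_le_gam : (a / c)%:E <= gam.
  apply: le_ereal_inf_tmp => _ [r Tr <-]; rewrite lee_fin.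
  have [r0|r_neq0] := eqVneq r 0%R; last by apply: ac_le; rewrite // lt0r r_neq0 T_ge0.
  (* if [0] is admissible, so is every [r > 0], which contradicts [a / c <= r] *)
  have ac2_gt0 : (0 < a / c / 2)%R by rewrite !divr_gt0.
  rewrite r0 in Tr; have := ac_le _ (T0 Tr _ ac2_gt0) ac2_gt0; lra.
case: gam gam_ge0 gam_le1 ac_le_gam => [g||] //; rewrite !lee_fin => _ _ ac_le_g.
have g_gt0 : (0 < g)%R by apply: lt_le_trans ac_le_g; rewrite divr_gt0.
by rewrite inver gt_eqF // -EFinM lee_fin ler_pdivrMr // mulrC -ler_pdivrMr.
Qed.

Lemma gammaS_ratio_le (m p : nat) (U S : set 'M[R]_(m, p)) (A B : \bar R) :
  U 0%R -> S `<=` U ->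
  (forall r, (0 < r <= 1)%R -> S `<=` scale_set r U -> A <= B * r%:E) ->
  A * (gammaS U S)^-1 <= B.
Proof.
move=> U0 SU AB; apply: ratio_le_of_scale.
- by move=> r [].
- by split=> // u Su; exists u; [exact: SU | exact: scale1r].
- move=> [_ S0] r r_gt0; split=> [|u Su]; first exact: ltW.
  by have [w _ <-] := S0 u Su; exists 0%R; rewrite // scale0r scaler0.
- by move=> r [_ SrU] r01; apply: AB r r01 SrU.
Qed.

End Ratio.

Section Scaling.
Context {R : realType}.
Variables (m p n1 n2 : nat) (b : 'I_m -> R).
Variables (f1 : 'rV[R]_n1 -> R) (f2 : 'rV[R]_n2 -> R).
Variable g : 'I_m -> 'rV[R]_n1 -> 'rV[R]_n2 -> 'rV[R]_p -> R.
Hypotheses (cvx_f1 : convex_fun f1) (f1_le0 : f1 0 <= 0).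
Hypotheses (cvx_f2 : convex_fun f2) (f2_le0 : f2 0 <= 0).
Hypothesis ccv_g : forall i u, concave_fun2 (fun x y => g i x y u).
Hypothesis cvx_g : forall i x y, convex_fun (g i x y).
Hypothesis g_le0 : forall i x y, g i x y 0 <= 0.

Lemma feasible_scale i r x y (w : 'rV_p) :
  0 < r <= 1 -> 0 <= g i 0 0 (r *: w) -> g i x y w <= b i ->
  g i (r^-1 *: x) (r^-1 *: y) (r *: w) <= b i.
Proof.
move=> /andP[r_gt0 r_le1] g0_rw g_w; have r01 : 0 <= r <= 1 by rewrite ltW.
have g0_w : 0 <= g i 0 0 w.
  have := convex_fun_scale_le w (cvx_g i 0 0) (g_le0 i 0 0) r01.
  by move=> /(le_trans g0_rw); rewrite pmulr_rge0.
have := ccv_g i w (r^-1 *: x) 0 (r^-1 *: y) 0 r r01.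
rewrite /= !scalerA mulfV ?gt_eqF // !scale1r !scaler0 !addr0.
have := convex_fun_scale_le w (cvx_g i _ _) (g_le0 i (r^-1 *: x) (r^-1 *: y)) r01.
have : 0 <= (1 - r) * g i 0 0 w by rewrite mulr_ge0 // subr_ge0.
lra.
Qed.

Lemma z_st_le_scale (S S' : set 'M[R]_(m, p)) r :
  0 < r <= 1 -> S `<=` scale_set r S' -> (forall i u, S u -> 0 <= g i 0 0 (row i u)) ->
  (z_st b f1 f2 g S' <= z_st b f1 f2 g S * r%:E)%E.
Proof.
move=> r01 SrS' g0_S; apply: ge_ereal_sup => _ [x [y [feas ->]]].
apply: (@le_trans _ _ ((f1 (r^-1 *: x) + f2 (r^-1 *: y))%:E * r%:E)%E).
  rewrite -EFinM lee_fin mulrDl ![_ * r]mulrC.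
  by apply: lerD; apply: convex_fun_le_scaleV.
apply: lee_wpmul2r; first by rewrite lee_fin ltW; case/andP: r01.
apply: ereal_sup_ubound; exists (r^-1 *: x), (r^-1 *: y); split=> // u Su i.
have [w S'w wu] := SrS' u Su; have := g0_S i u Su.
rewrite -wu linearZ /= => g0_rw; apply: feasible_scale => //; exact: feas.
Qed.

Lemma z_ad_le_scale (S S' : set 'M[R]_(m, p)) r :
  0 < r <= 1 -> S `<=` scale_set r S' -> (forall i u, S u -> 0 <= g i 0 0 (row i u)) ->
  (z_ad b f1 f2 g S' <= z_ad b f1 f2 g S * r%:E)%E.
Proof.
move=> r01 SrS' g0_S; have [r_gt0 _] := andP r01.
have scaleVK (w : 'M[R]_(m, p)) : r^-1 *: (r *: w) = w.
  by rewrite scalerA mulVf ?gt_eqF // scale1r.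
apply: ge_ereal_sup => _ [x [y [feas ->]]].
pose y' u := r^-1 *: y (r^-1 *: u).
have inf_le : (ereal_inf [set (f2 (y w))%:E | w in S']
    <= ereal_inf [set (f2 (y' u))%:E | u in S] * r%:E)%E.
  rewrite muleC -ereal_inf_pZl //; apply: le_ereal_inf_tmp => _ [_ [u Su <-] <-].
  have [w S'w wu] := SrS' u Su; rewrite -EFinM -wu /y' scaleVK.
  apply: le_trans (ereal_inf_lbound _) _; first by exists w.
  by rewrite lee_fin; apply: convex_fun_le_scaleV.
apply: (@le_trans _ _ (((f1 (r^-1 *: x))%:E
    + ereal_inf [set (f2 (y' u))%:E | u in S]) * r%:E)%E).
  rewrite muleDl // -EFinM; apply: leeD => //.
  by rewrite lee_fin mulrC; apply: convex_fun_le_scaleV.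
apply: lee_wpmul2r; first by rewrite lee_fin ltW.
apply: ereal_sup_ubound; exists (r^-1 *: x), y'; split=> // u Su i.
have [w S'w wu] := SrS' u Su; have := g0_S i u Su.
rewrite -wu /y' scaleVK linearZ /= => g0_rw; apply: feasible_scale => //; exact: feas.
Qed.

End Scaling.

Section Tightness.
Context {R : realType}.
Variable gam : R.
Hypothesis gam01 : 0 < gam <= 1.

Definition tight_Ui (i : 'I_1) : set 'rV[R]_1 := [set v | 0 <= v 0 0 <= 1].
Definition tight_C : set 'M[R]_1 := [set u | u 0 0 <= gam].
Definition tight_b (i : 'I_1) : R := 1.
Definition tight_f1 (x : 'rV[R]_1) : R := x 0 0.
Definition tight_f2 (y : 'rV[R]_1) : R := 0.
Definition tight_g (i : 'I_1) (x y u : 'rV[R]_1) : R := x 0 0 * u 0 0.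

Lemma tight_setting : setting tight_Ui tight_C tight_b tight_f1 tight_f2 tight_g.
Proof.
have [gam_gt0 gam_le1] := andP gam01.
rewrite /setting /tight_Ui /tight_C /tight_f1 /tight_f2 /tight_g /=.
split.
  move=> i x y t /andP[x0 x1] /andP[y0 y1] /andP[t0 t1] /=; rewrite !mxE.
  apply/andP; split; nra.
split; first by split=> [i|] /=; rewrite !mxE ?lexx ?ler01 ?(ltW gam_gt0).
split; first by split=> x y t _; rewrite ?mxE // !mulr0 addr0.
split; first by rewrite mxE.
split; first by move=> i u x1 x2 y1 y2 t /andP[t0 t1]; rewrite !mxE; nra.
split; first by move=> i x y u1 u2 t /andP[t0 t1]; rewrite !mxE; nra.
by split=> i *; rewrite !mxE ?mul0r ?mulr0.
Qed.

Lemma tight_z (S : set 'M[R]_1) (c : R) :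
  0 < c -> (forall u, S u -> 0 <= u 0 0 <= c) -> S (const_mx c) -> S 0 ->
  z_st tight_b tight_f1 tight_f2 tight_g S = (c^-1)%:E /\
  z_ad tight_b tight_f1 tight_f2 tight_g S = (c^-1)%:E.
Proof.
move=> c_gt0 S_bnd Sc S0.
have inf_f2 (y : 'M[R]_1 -> 'rV[R]_1) :
    ereal_inf [set (tight_f2 (y u))%:E | u in S] = 0%E.
  apply/le_anti/andP; split; first by apply: ereal_inf_lbound; exists 0.
  by apply: le_ereal_inf_tmp => _ [u _ <-].
have x_le (x y : 'rV[R]_1) : tight_g 0 x y (row 0 (const_mx c)) <= 1 -> x 0 0 <= c^-1.
  by rewrite /tight_g !mxE -[c^-1]mul1r ler_pdivlMr.
have feas u i : S u -> tight_g i (const_mx c^-1) 0 (row i u) <= tight_b i.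
  move=> /S_bnd /andP[u_ge0 u_le]; rewrite /tight_g /tight_b (ord1 i) !mxE.
  by rewrite mulrC ler_pdivrMr // mul1r.
split; apply/le_anti/andP; split.
- apply: ge_ereal_sup => _ [x [y [xy_feas ->]]].
  by rewrite lee_fin /tight_f2 addr0; apply: x_le; apply: xy_feas.
- apply: ereal_sup_ubound; exists (const_mx c^-1), 0; split=> [u Su i|].
    exact: feas.
  by rewrite /tight_f1 /tight_f2 mxE addr0.
- apply: ge_ereal_sup => _ [x [y [xy_feas ->]]].
  by rewrite inf_f2 adde0 lee_fin; apply: x_le; apply: xy_feas.
- apply: ereal_sup_ubound; exists (const_mx c^-1), (fun=> 0); split=> [u Su i|].
    exact: feas.
  by rewrite inf_f2 adde0 /tight_f1 mxE.
Qed.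

Lemma tight_gammaS (S : set 'M[R]_1) :
  prod_set tight_Ui `&` tight_C `<=` S -> (forall u, S u -> 0 <= u 0 0 <= gam) ->
  gammaS (prod_set tight_Ui) S = gam%:E.
Proof.
have [gam_gt0 gam_le1] := andP gam01.
move=> sub S_bnd; have Sgam : S (const_mx gam).
  by apply: sub; split=> [i|]; rewrite /tight_Ui /tight_C /= !mxE ?(ltW gam_gt0).
apply/le_anti/andP; split.
  apply: ereal_inf_lbound; exists gam => //; split=> [|u Su]; first exact: ltW.
  exists (gam^-1 *: u); last by rewrite scalerA mulfV ?gt_eqF // scale1r.
  move=> i; rewrite /tight_Ui /= (ord1 i) !mxE; have /andP[u_ge0 u_le] := S_bnd u Su.
  by rewrite mulr_ge0 ?invr_ge0 ?(ltW gam_gt0) //= ler_pdivrMl // mulr1.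
apply: le_ereal_inf_tmp => _ [r [r_ge0 SrU] <-]; rewrite lee_fin.
have [w Uw wgam] := SrU _ Sgam.
have := Uw 0; have := congr1 (fun M : 'M[R]_1 => M 0 0) wgam.
by rewrite /tight_Ui /= !mxE => <- /andP[_ w_le1]; rewrite ler_piMr.
Qed.

Lemma tight_values :
  let U := prod_set tight_Ui in let Ubar := U `&` tight_C in
  [/\ z_st tight_b tight_f1 tight_f2 tight_g U = 1%:E
        /\ z_ad tight_b tight_f1 tight_f2 tight_g U = 1%:E,
      z_st tight_b tight_f1 tight_f2 tight_g Ubar = (gam^-1)%:E
        /\ z_ad tight_b tight_f1 tight_f2 tight_g Ubar = (gam^-1)%:E,
      gammaS U (proj_all Ubar) = gam%:E &
      gammaS U Ubar = gam%:E].
Proof.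
have [gam_gt0 gam_le1] := andP gam01.
move=> U Ubar.
have U_bnd u : U u -> 0 <= u 0 0 <= 1 by move=> /(_ 0); rewrite /tight_Ui /= !mxE.
have Ubar_bnd u : Ubar u -> 0 <= u 0 0 <= gam.
  by move=> [/U_bnd /andP[-> _]]; rewrite /tight_C /=.
have U0 : U 0 by move=> i; rewrite /tight_Ui /= !mxE lexx ler01.
have Ubar0 : Ubar 0 by split=> //; rewrite /tight_C /= mxE (ltW gam_gt0).
have U1 : U (const_mx 1) by move=> i; rewrite /tight_Ui /= !mxE lexx ler01.
have Ubar_gam : Ubar (const_mx gam).
  by split=> [i|]; rewrite /tight_Ui /tight_C /= !mxE ?(ltW gam_gt0).
split; first by rewrite -invr1; apply: tight_z.
- exact: tight_z.
- apply: tight_gammaS => [u Ubar_u i|u Pu]; first by exists u.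
  have [v Ubar_v vu] := Pu 0; have := congr1 (fun M : 'rV[R]_1 => M 0 0) vu.
  by rewrite !mxE => <-; apply: Ubar_bnd.
- exact: tight_gammaS.
Qed.

End Tightness.

Theorem theorem12 (R : realType) :
  (* the bounds *)
  (forall (m p n1 n2 : nat) (Ui : 'I_m -> set 'rV[R]_p) (C : set 'M[R]_(m, p))
     (b : 'I_m -> R) (f1 : 'rV[R]_n1 -> R) (f2 : 'rV[R]_n2 -> R)
     (g : 'I_m -> 'rV[R]_n1 -> 'rV[R]_n2 -> 'rV[R]_p -> R),
   setting Ui C b f1 f2 g ->
   let U := prod_set Ui in
   let Ubar := U `&` C in
   let z_aro := z_ad b f1 f2 g U in
   let z_acp := z_ad b f1 f2 g Ubar in
   let z_ro := z_st b f1 f2 g U in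
   let z_cp := z_st b f1 f2 g Ubar in
   let gamma_ro := gammaS U (proj_all Ubar) in
   let gamma_aro := gammaS U Ubar in
   (0 < z_acp)%E -> (z_ro < +oo)%E ->
   (z_ro * gamma_ro^-1 <= z_cp)%E /\ (z_aro * gamma_aro^-1 <= z_acp)%E) /\
  (* tightness: for every admissible value gamma in (0,1], an instance attains equality *)
  (forall gam : R, 0 < gam <= 1 ->
   exists (m p n1 n2 : nat) (Ui : 'I_m -> set 'rV[R]_p) (C : set 'M[R]_(m, p))
     (b : 'I_m -> R) (f1 : 'rV[R]_n1 -> R) (f2 : 'rV[R]_n2 -> R)
     (g : 'I_m -> 'rV[R]_n1 -> 'rV[R]_n2 -> 'rV[R]_p -> R),
   setting Ui C b f1 f2 g /\
   let U := prod_set Ui in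
   let Ubar := U `&` C in
   let z_aro := z_ad b f1 f2 g U in
   let z_acp := z_ad b f1 f2 g Ubar in
   let z_ro := z_st b f1 f2 g U in
   let z_cp := z_st b f1 f2 g Ubar in
   let gamma_ro := gammaS U (proj_all Ubar) in
   let gamma_aro := gammaS U Ubar in
   (0 < z_acp)%E /\ (z_ro < +oo)%E /\
   gamma_ro = gam%:E /\ gamma_aro = gam%:E /\
   (z_ro \is a fin_num) /\ (z_aro \is a fin_num) /\
   z_cp = (z_ro * gamma_ro^-1)%E /\
   z_acp = (z_aro * gamma_aro^-1)%E).
Proof.
split.
  move=> m p n1 n2 Ui C b f1 f2 g
    [_ [[U0 _] [[cvx_f1 cvx_f2] [[f1_0 f2_0] [ccv_g [cvx_g [g0_ge0 g_le0]]]]]]].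
  lazy zeta => _ _.
  have f1_le0 : f1 0 <= 0 by rewrite f1_0.
  have f2_le0 : f2 0 <= 0 by rewrite f2_0.
  split.
    apply: gammaS_ratio_le => // [u Pu i|r r01 PrU].
      by have [v [Uv _] <-] := Pu i; apply: Uv.
    by apply: z_st_le_scale => // u Ubar_u; apply: PrU => i; exists u.
  by apply: gammaS_ratio_le => // r r01 UrU; apply: z_ad_le_scale.
move=> gam gam01; have gam_gt0 : 0 < gam by case/andP: gam01.
exists 1%N, 1%N, 1%N, 1%N, tight_Ui, (tight_C gam), tight_b, tight_f1, tight_f2, tight_g.
split; first exact: tight_setting gam gam01.
lazy zeta; have [[-> ->] [-> ->] -> ->] := tight_values gam gam01.
rewrite /= inver gt_eqF // mul1e lte_fin invr_gt0 gam_gt0 ltey.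
by do !split.
Qed.
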